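(* Let $P=(X,\prec)$ be a finite twin-free interval order containing no induced subposet isomorphic to any of $\mathbf{4}+\mathbf{1}$, $\mathbf{3}+\mathbf{1}+\mathbf{1}$, $Z$, $D$, $Y$, or the dual of $Y$. Then there exists a closed interval representation $\{I(x):x\in X\}$ of $P$ such that: (1) no interval strictly contains two other intervals; (2) no interval is strictly contained in two other intervals; (3) if $I(u)\subsetneq I(v)$ then there are unique $x,y\in X$ such that $x$ peeks into $vu$ from the left and $y$ peeks into $vu$ from the right.
   Context: Posets are strict (irreflexive) partial orders; twins are points with exactly the same comparabilities; twin-free means no two distinct twins. A closed interval representation of $P$ assigns a closed real interval $I(x)=[L(x),R(x)]$ to each $x$ with $x\prec y$ iff $R(x)<L(y)$; $P$ is an interval order if one exists. $I(u)$ is strictly contained in $I(v)$ if $I(u)\subset I(v)$ and they do not have identical endpoints. For $u,v,x$ with $I(u)\subsetneq I(v)$: $x$ peeks into $vu$ if $I(x)$ meets $I(v)$ but not $I(u)$; from the left if moreover $R(x)\le L(u)$; from the right if moreover $R(u)\le L(x)$. Forbidden posets (unlisted, non-transitively-implied pairs incomparable): $\mathbf{4}+\mathbf{1}$: $a\prec b\prec c\prec d$ plus isolated $x$. $\mathbf{3}+\mathbf{1}+\mathbf{1}$: $a\prec b\prec c$ plus isolated $x,y$. $Z$: $a,b,c,d,x,y$ with $a\prec b\prec c\prec d$, $x\prec d$, $a\prec y$. $D$: $a,b,c,d,x$ with $a\prec b\prec d$, $a\prec c\prec d$. $Y$: $a,b,c,d,x$ with $a\prec d\prec b$, $a\prec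 d\prec c$. The dual reverses all comparabilities. *)

From Stdlib Require Import Reals.
From mathcomp Require Import all_boot.

Set Implicit Arguments.
Unset Strict Implicit.
Unset Printing Implicit Defensive.

Definition strict_order (T : finType) (lt : rel T) : Prop :=
  (forall x, ~~ lt x x) /\ (forall x y z, lt x y -> lt y z -> lt x z).

Definition twins (T : finType) (lt : rel T) (x y : T) : Prop :=
  forall z, lt x z = lt y z /\ lt z x = lt z y.

Definition twin_free (T : finType) (lt : rel T) : Prop :=
  forall x y, twins lt x y -> x = y.

(* Small posets on 'I_n given by the (transitively closed) list of strict pairs. *)
Definition rel_of_pairs (n : nat) (s : seq (nat * nat)) : rel 'I_n :=
  fun i j => (nat_of_ord i, nat_of_ord j) \in s.

Definition P4p1 : rel 'I_5 :=
  rel_of_pairs [:: (0,1); (0,2); (0,3); (1,2); (1,3); (2,3)].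
Definition P3p1p1 : rel 'I_5 :=
  rel_of_pairs [:: (0,1); (0,2); (1,2)].
(* Z : a=0 < b=1 < c=2 < d=3, x=4 < d, a < y=5 *)
Definition PZ : rel 'I_6 :=
  rel_of_pairs [:: (0,1); (0,2); (0,3); (1,2); (1,3); (2,3); (4,3); (0,5)].
(* D : a=0 < b=1 < d=3, a < c=2 < d, x=4 isolated *)
Definition PD : rel 'I_5 :=
  rel_of_pairs [:: (0,1); (0,2); (0,3); (1,3); (2,3)].
(* Y : a=0 < d=3 < b=1, a < d < c=2, x=4 isolated *)
Definition PY : rel 'I_5 :=
  rel_of_pairs [:: (0,3); (3,1); (3,2); (0,1); (0,2)].
Definition PYdual : rel 'I_5 := fun i j => PY j i.

Definition contains_induced (T : finType) (lt : rel T) (n : nat) (Q : rel 'I_n) : Prop :=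
  exists f : 'I_n -> T, injective f /\ forall i j, lt (f i) (f j) = Q i j.

Definition interval_rep (T : finType) (lt : rel T) (lo hi : T -> R) : Prop :=
  (forall x, (Rle (lo x) (hi x))) /\ (forall x y, lt x y <-> (Rlt (hi x) (lo y))).

Definition interval_order (T : finType) (lt : rel T) : Prop :=
  exists lo hi : T -> R, interval_rep lt lo hi.

Definition strictly_in (T : finType) (lo hi : T -> R) (u v : T) : Prop :=
  (Rle (lo v) (lo u)) /\ (Rle (hi u) (hi v)) /\ ~ (lo u = lo v /\ hi u = hi v).

Definition meets (T : finType) (lo hi : T -> R) (x y : T) : Prop :=
  (Rle (lo x) (hi y)) /\ (Rle (lo y) (hi x)).

Definition peeks (T : finType) (lo hi : T -> R) (x v u : T) : Prop :=
  meets lo hi x v /\ ~ meets lo hi x u.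

Definition peeks_left (T : finType) (lo hi : T -> R) (x v u : T) : Prop :=
  peeks lo hi x v u /\ (Rle (hi x) (lo u)).

Definition peeks_right (T : finType) (lo hi : T -> R) (x v u : T) : Prop :=
  peeks lo hi x v u /\ (Rle (hi u) (lo x)).

From Stdlib Require Import Reals Lra.
From mathcomp Require Import all_boot zify.

Set Implicit Arguments.
Unset Strict Implicit.
Unset Printing Implicit Defensive.

(* Any interval order is represented by the integer intervals
   [down_rank x, up_rank x], where down_rank x counts the elements below x and
   up_rank x is the largest down_rank of an element not above x.  Perturbing
   these endpoints lexicographically makes every containment strict at both
   ends, so I(u) is strictly inside I(v) exactly when both ranks of u lie
   strictly inside those of v.  Then there are points a < u < d incomparable
   to v, and a second interval inside I(v), a second interval around I(u) or a
   second peeking point would complete, together with a, u, d and v, an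
   induced 4+1, D, 3+1+1, Y or dual Y.  Twins receive identical intervals. *)

Lemma leq_lex K a b c d : c < K -> d < K ->
  (K * a + c <= K * b + d) = (a < b) || (a == b) && (c <= d).
Proof.
move=> cK dK; case: ltngtP => [ab|ba|->] /=; last by rewrite leq_add2l.
- have : K * a.+1 <= K * b by rewrite leq_mul2l ab orbT.
  nia.
- have : K * b.+1 <= K * a by rewrite leq_mul2l ba orbT.
  nia.
Qed.

Section IntervalRepresentation.
Variables (T : finType) (lt : rel T) (lo hi : T -> R).
Hypothesis rep : interval_rep lt lo hi.

Lemma meetsE x y : meets lo hi x y <-> ~~ lt x y /\ ~~ lt y x.
Proof.
have [_ ltE] := rep; split.
- by case=> xy yx; split; apply/negP => /ltE; lra.
- case=> /negP xy /negP yx; split; apply: Rnot_lt_le => h;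
    [apply: yx | apply: xy]; exact/ltE.
Qed.

Lemma peeks_leftE x v u :
  peeks_left lo hi x v u <-> lt x u /\ ~~ lt x v /\ ~~ lt v x.
Proof.
have [lohi ltE] := rep; split.
- case=> [[/meetsE[xv vx] xu] hxu]; split=> //.
  apply/negPn/negP => nxu; apply: xu; apply/meetsE; split=> //.
  apply/negP => /ltE; have := lohi x; have := lohi u; lra.
- case=> xu [xv vx]; split; [split|].
  + exact/meetsE.
  + by case/meetsE; rewrite xu.
  + exact/Rlt_le/ltE.
Qed.

Lemma peeks_rightE y v u :
  peeks_right lo hi y v u <-> lt u y /\ ~~ lt y v /\ ~~ lt v y.
Proof.
have [lohi ltE] := rep; split.
- case=> [[/meetsE[yv vy] yu] huy]; split=> //.
  apply/negPn/negP => nuy; apply: yu; apply/meetsE; split=> //.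
  apply/negP => /ltE; have := lohi y; have := lohi u; lra.
- case=> uy [yv vy]; split; [split|].
  + exact/meetsE.
  + by case/meetsE; rewrite uy.
  + exact/Rlt_le/ltE.
Qed.

End IntervalRepresentation.

Section Ranks.
Variables (T : finType) (lt : rel T) (lo0 hi0 : T -> R).
Hypotheses (ltxx : forall x, ~~ lt x x) (rep0 : interval_rep lt lo0 hi0).

Definition down_set x : {set T} := [set y | lt y x].
Definition down_rank x := #|down_set x|.
Definition up_rank x := \max_(z | ~~ lt x z) down_rank z.

Lemma down_set_total x y :
  (down_set x \subset down_set y) || (down_set y \subset down_set x).
Proof.
have [_ ltE] := rep0.
have [xy|yx] := Rle_or_lt (lo0 x) (lo0 y); apply/orP; [left|right];
  apply/subsetP => z; rewrite !inE => /ltE zx; apply/ltE; lra.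
Qed.

Lemma up_rank_attained x : exists2 z, ~~ lt x z & up_rank x = down_rank z.
Proof.
have : 0 < #|[pred z | ~~ lt x z]| by apply/card_gt0P; exists x; rewrite inE.
case/(eq_bigmax_cond down_rank) => z; rewrite inE => xz eq_z.
by exists z => //; exact: eq_z.
Qed.

Lemma down_le_up x : down_rank x <= up_rank x.
Proof. exact: leq_bigmax_cond. Qed.

Lemma down_rank_le_card x : down_rank x <= #|T|.
Proof. exact: max_card. Qed.

Lemma up_rank_le_card x : up_rank x <= #|T|.
Proof. by have [z _ ->] := up_rank_attained x; exact: max_card. Qed.

Lemma lt_rankE x y : lt x y = (up_rank x < down_rank y).
Proof.
apply/idP/idP => [xy|]; last first.
  by apply: contraTT => nxy; rewrite -leqNgt; exact: leq_bigmax_cond.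
have [z xz ->] := up_rank_attained x; apply: proper_card; apply/properP; split.
  have /orP[//|yz] := down_set_total z y.
  by have := subsetP yz x; rewrite !inE (negbTE xz) xy => /(_ isT).
by exists x; rewrite !inE // (negbTE xz).
Qed.

Lemma down_rank_sep u v :
  down_rank v < down_rank u -> exists2 a, lt a u & ~~ lt a v.
Proof.
move=> vu; have : ~~ (down_set u \subset down_set v).
  by apply: contraTN vu => /subset_leq_card; rewrite leqNgt.
by case/subsetPn => a; rewrite !inE; exists a.
Qed.

Lemma up_rank_sep u v : up_rank u < up_rank v -> exists2 d, lt u d & ~~ lt v d.
Proof.
by have [z vz eq_z] := up_rank_attained v; exists z; rewrite // lt_rankE -eq_z.
Qed.

Definition nested u v := (down_rank v < down_rank u) && (up_rank u < up_rank v).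

Local Notation N := #|T|.+1.

(* rank_lo orders the points lexicographically by (down_rank, up_rank) and
   rank_hi by (up_rank, down_rank), so intervals sharing a rank endpoint are
   never nested. *)
Definition rank_lo x : R := INR (2 * N * down_rank x + up_rank x).
Definition rank_hi x : R := INR (2 * N * up_rank x + (N + down_rank x)).

Lemma rank_rep : interval_rep lt rank_lo rank_hi.
Proof.
split=> [x|x y].
  apply/le_INR/leP; have := down_le_up x; have := up_rank_le_card x; nia.
have := up_rank_le_card y; have := down_rank_le_card x.
rewrite /rank_lo /rank_hi lt_rankE => Hy Lx; split=> [xy|/INR_lt/ltP].
- apply/lt_INR/ltP; rewrite ltnNge leq_lex; lia.
- rewrite ltnNge leq_lex; lia.
Qed.

Lemma strictly_in_nested u v : strictly_in rank_lo rank_hi u v -> nested u v.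
Proof.
have := up_rank_le_card u; have := up_rank_le_card v.
have := down_rank_le_card u; have := down_rank_le_card v.
rewrite /rank_lo /rank_hi => Lv Lu Hv Hu.
case=> /INR_le/leP lo_vu [/INR_le/leP hi_uv].
move: lo_vu hi_uv; rewrite !leq_lex; try lia.
move=> lo_vu hi_uv tight; apply/andP; split; apply/negPn/negP => edge;
  by apply: tight; split; congr INR; lia.
Qed.

Ltac rank_bounds s :=
  lazymatch s with
  | ?x :: ?s' => pose proof (down_le_up x); rank_bounds s'
  | _ => idtac
  end.

Ltac case_ord5 := case=> [[|[|[|[|[|?]]]]] ?] //.

(* Once [lt] is read through [lt_rankE], every comparability and every
   equation between two points of [s] is decided by lia on their ranks. *)
Ltac embed s :=
  lazymatch s with
  | ?x0 :: _ =>
    rank_bounds s; exists (nth x0 s); split;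
    [ case_ord5; case_ord5 => //= E;
      first [exact: val_inj | subst; first [congruence | lia]]
    | case_ord5; case_ord5; rewrite /= lt_rankE;
      match goal with |- _ = ?r =>
        let r' := eval vm_compute in r in change r with r' end; lia ]
  end.

(* Since the order is an interval order, a point meeting both ends of a chain
   meets all of it; this keeps the hypotheses below short. *)
Lemma induced_4p1 a b c d v : lt a b -> lt b c -> lt c d ->
  ~~ lt a v -> ~~ lt v d -> contains_induced lt P4p1.
Proof.
rewrite !lt_rankE => *.
embed [:: a; b; c; d; v].
Qed.

Lemma induced_3p1p1 a b c x y : lt a b -> lt b c ->
  ~~ lt a x -> ~~ lt x c -> ~~ lt a y -> ~~ lt y c ->
  ~~ lt x y -> ~~ lt y x -> x != y -> contains_induced lt P3p1p1.
Proof.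
rewrite !lt_rankE => ? ? ? ? ? ? ? ? /eqP ?.
embed [:: a; b; c; x; y].
Qed.

Lemma induced_D a b c d x : lt a b -> lt a c -> lt b d -> lt c d ->
  ~~ lt b c -> ~~ lt c b -> b != c -> ~~ lt a x -> ~~ lt x d ->
  contains_induced lt PD.
Proof.
rewrite !lt_rankE => ? ? ? ? ? ? /eqP ? ? ?.
embed [:: a; b; c; d; x].
Qed.

Lemma induced_Y a b c d x : lt a d -> lt d b -> lt d c ->
  ~~ lt b c -> ~~ lt c b -> b != c -> ~~ lt a x -> ~~ lt x b -> ~~ lt x c ->
  contains_induced lt PY.
Proof.
rewrite !lt_rankE => ? ? ? ? ? /eqP ? ? ? ?.
embed [:: a; b; c; d; x].
Qed.

Lemma induced_Ydual a b c d x : lt b d -> lt c d -> lt d a ->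
  ~~ lt b c -> ~~ lt c b -> b != c -> ~~ lt x a -> ~~ lt b x -> ~~ lt c x ->
  contains_induced lt PYdual.
Proof.
rewrite !lt_rankE => ? ? ? ? ? /eqP ? ? ? ?.
embed [:: a; b; c; d; x].
Qed.

Lemma nested_inner_unique u1 u2 v :
  ~ contains_induced lt P4p1 -> ~ contains_induced lt PD ->
  nested u1 v -> nested u2 v -> u1 = u2.
Proof.
move=> no4p1 noD /andP[L1 H1] /andP[L2 H2]; apply/eqP/negPn/negP => u12.
have [a /andP[au1 au2] av] : exists2 a, lt a u1 && lt a u2 & ~~ lt a v.
  have [le12|lt21] := leqP (down_rank u1) (down_rank u2).
  - have [a au av] := down_rank_sep L1.
    by exists a; rewrite // !lt_rankE in au *; lia.
  - have [a au av] := down_rank_sep L2.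
    by exists a; rewrite // !lt_rankE in au *; lia.
have [d /andP[u1d u2d] vd] : exists2 d, lt u1 d && lt u2 d & ~~ lt v d.
  have [le12|lt21] := leqP (up_rank u1) (up_rank u2).
  - have [d ud vd] := up_rank_sep H2.
    by exists d; rewrite // !lt_rankE in ud *; lia.
  - have [d ud vd] := up_rank_sep H1.
    by exists d; rewrite // !lt_rankE in ud *; lia.
have [u1u2|n12] := boolP (lt u1 u2).
  exact: no4p1 (induced_4p1 au1 u1u2 u2d av vd).
have [u2u1|n21] := boolP (lt u2 u1).
  exact: no4p1 (induced_4p1 au2 u2u1 u1d av vd).
exact: noD (induced_D au1 au2 u1d u2d n12 n21 u12 av vd).
Qed.

Lemma nested_outer_unique u v1 v2 : ~ contains_induced lt P3p1p1 ->
  nested u v1 -> nested u v2 -> v1 = v2.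
Proof.
move=> no3p1p1 /andP[L1 H1] /andP[L2 H2]; apply/eqP/negPn/negP => v12.
have [a au /andP[av1 av2]] : exists2 a, lt a u & ~~ lt a v1 && ~~ lt a v2.
  have [le12|lt21] := leqP (down_rank v1) (down_rank v2).
  - have [a au av] := down_rank_sep L2.
    by exists a; rewrite // !lt_rankE in av *; lia.
  - have [a au av] := down_rank_sep L1.
    by exists a; rewrite // !lt_rankE in av *; lia.
have [d ud /andP[v1d v2d]] : exists2 d, lt u d & ~~ lt v1 d && ~~ lt v2 d.
  have [le12|lt21] := leqP (up_rank v1) (up_rank v2).
  - have [d ud vd] := up_rank_sep H1.
    by exists d; rewrite // !lt_rankE in vd *; lia.
  - have [d ud vd] := up_rank_sep H2.
    by exists d; rewrite // !lt_rankE in vd *; lia.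
have uu := down_le_up u.
have n12 : ~~ lt v1 v2 by rewrite lt_rankE; lia.
have n21 : ~~ lt v2 v1 by rewrite lt_rankE; lia.
exact: no3p1p1 (induced_3p1p1 au ud av1 v1d av2 v2d n12 n21 v12).
Qed.

Lemma unique_left_peeker u v :
  ~ contains_induced lt P4p1 -> ~ contains_induced lt PYdual ->
  nested u v -> exists! x, peeks_left rank_lo rank_hi x v u.
Proof.
move=> no4p1 noYd /andP[Lvu Huv].
have peeksE := peeks_leftE rank_rep.
have [a au av] := down_rank_sep Lvu; have [d ud vd] := up_rank_sep Huv.
exists a; split.
  apply/peeksE; do 2!split=> //; rewrite !lt_rankE in au *.
  by have := down_le_up a; have := down_le_up u; lia.
move=> x /peeksE[xu [xv _]]; apply/eqP/negPn/negP => ax.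
have [ax'|nax] := boolP (lt a x).
  exact: no4p1 (induced_4p1 ax' xu ud av vd).
have [xa|nxa] := boolP (lt x a).
  exact: no4p1 (induced_4p1 xa au ud xv vd).
exact: noYd (induced_Ydual au xu ud nax nxa ax vd av xv).
Qed.

Lemma unique_right_peeker u v :
  ~ contains_induced lt P4p1 -> ~ contains_induced lt PY ->
  nested u v -> exists! y, peeks_right rank_lo rank_hi y v u.
Proof.
move=> no4p1 noY /andP[Lvu Huv].
have peeksE := peeks_rightE rank_rep.
have [a au av] := down_rank_sep Lvu; have [d ud vd] := up_rank_sep Huv.
exists d; split.
  apply/peeksE; do 2!split=> //; rewrite !lt_rankE in ud *.
  by have := down_le_up d; have := down_le_up u; lia.
move=> y /peeksE[uy [_ vy]]; apply/eqP/negPn/negP => dy.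
have [dy'|ndy] := boolP (lt d y).
  exact: no4p1 (induced_4p1 au ud dy' av vy).
have [yd|nyd] := boolP (lt y d).
  exact: no4p1 (induced_4p1 au uy yd av vd).
exact: noY (induced_Y au ud uy ndy nyd dy av vd vy).
Qed.

End Ranks.

Theorem proposition13 (T : finType) (lt : rel T) :
  strict_order lt ->
  twin_free lt ->
  interval_order lt ->
  ~ contains_induced lt P4p1 ->
  ~ contains_induced lt P3p1p1 ->
  ~ contains_induced lt PZ ->
  ~ contains_induced lt PD ->
  ~ contains_induced lt PY ->
  ~ contains_induced lt PYdual ->
  exists lo hi : T -> R,
    interval_rep lt lo hi /\
    (forall v u1 u2, strictly_in lo hi u1 v -> strictly_in lo hi u2 v -> u1 = u2) /\
    (forall u v1 v2, strictly_in lo hi u v1 -> strictly_in lo hi u v2 -> v1 = v2) /\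
    (forall u v, strictly_in lo hi u v ->
       (exists! x, peeks_left lo hi x v u) /\ (exists! y, peeks_right lo hi y v u)).
Proof.
move=> [ltxx _] _ [lo0 [hi0 rep0]] no4p1 no3p1p1 _ noD noY noYd.
have nestedP := strictly_in_nested ltxx.
exists (rank_lo lt), (rank_hi lt); split; first exact: rank_rep ltxx rep0.
split; [|split].
- move=> v u1 u2 /nestedP u1v /nestedP u2v.
  exact: (nested_inner_unique ltxx rep0 no4p1 noD u1v u2v).
- move=> u v1 v2 /nestedP uv1 /nestedP uv2.
  exact: (nested_outer_unique ltxx rep0 no3p1p1 uv1 uv2).
- move=> u v /nestedP uv; split.
  + exact: (unique_left_peeker ltxx rep0 no4p1 noYd uv).
  + exact: (unique_right_peeker ltxx rep0 no4p1 noY uv).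
Qed.
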